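(* Let $O=(U,\prec)$ be a CvT order on a finite set of operations $U=C\cup T$, $C\cap T=\varnothing$. Suppose that for every Cv-set $C_i$ and all $p,q\in C_i$, the operations $p$ and $q$ commute. Then every LAC system for $O$ is state convergent, i.e. for any two linear extensions $O_i=(U,<_i)$ and $O_j=(U,<_j)$ of $O$ we have $S(O_i)=S(O_j)$.
   Context: Operations are modeled as state transformers: there is a set of states $\Sigma$, an initial state $s_0\in\Sigma$, and each operation $u\in U$ is a function $u:\Sigma\to\Sigma$. For a linear order (sequence) $u_1<u_2<\dots<u_n$ of $U$, its resulting state is $S=u_n(\cdots u_2(u_1(s_0))\cdots)$. Two operations $p,q$ commute if $p\circ q=q\circ p$. A CvT order is a strict partial order $O=(U,\prec)$ on $U=C\cup T$ ($C\cap T=\varnothing$) such that (i) any two distinct $u,v\in T$ are comparable ($u\prec v$ or $v\prec u$), and (ii) every $p\in C$ and $u\in T$ are comparable ($p\prec u$ or $u\prec p$). A Cv-set is a subset $C_i\subseteq C$ such that (a) any two elements of $C_i$ are incomparable under $\prec$, and (b) every $p\in C\setminus C_i$ is comparable to some $q\in C_i$. A replicated system provides local atomic consistency (LAC) if each site applies the operations of $U$ according to some linear extension of the CvT order. An LAC system is state convergent if all linear extensions of the underlying CvT order yield the same resulting state. *)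

From mathcomp Require Import all_boot.
Set Implicit Arguments. Unset Strict Implicit. Unset Printing Implicit Defensive.

Definition strict_porder (U : finType) (lt : rel U) : Prop :=
  (forall u, ~~ lt u u) /\ (forall u v w, lt u v -> lt v w -> lt u w).

Definition comparable_rel (U : finType) (lt : rel U) (u v : U) : bool :=
  lt u v || lt v u.

Definition CvT_order (U : finType) (C T : {set U}) (lt : rel U) : Prop :=
  [/\ strict_porder lt, [disjoint C & T], C :|: T = [set: U],
      (forall u v, u \in T -> v \in T -> u != v -> comparable_rel lt u v) &
      (forall p u, p \in C -> u \in T -> comparable_rel lt p u)].

Definition Cv_set (U : finType) (C : {set U}) (lt : rel U) (Ci : {set U}) : Prop :=
  [/\ Ci \subset C,
      (forall p q, p \in Ci -> q \in Ci -> ~~ comparable_rel lt p q) &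
      (forall p, p \in C :\: Ci -> exists2 q, q \in Ci & comparable_rel lt p q)].

Definition linear_extension (U : finType) (lt : rel U) (s : seq U) : Prop :=
  uniq s /\ (forall u, u \in s) /\
  (forall u v, lt u v -> index u s < index v s).

Definition result_state (U : finType) (Sigma : Type) (op : U -> Sigma -> Sigma)
  (s0 : Sigma) (s : seq U) : Sigma :=
  foldl (fun st u => op u st) s0 s.

Definition commute_ops (Sigma : Type) (f g : Sigma -> Sigma) : Prop :=
  forall x, f (g x) = g (f x).

(* Two linear extensions of the order are permutations of each other, and the
   operation applied first by one of them can be moved to the front of the
   other: every operation it overtakes is incomparable to it.  Incomparable
   operations are never in T, so they form an antichain of C; that antichain
   extends to a maximal one, i.e. a Cv-set, hence the two operations commute. *)
From mathcomp Require Import all_boot.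

Set Implicit Arguments.
Unset Strict Implicit.

Section CommutingPermutations.

Variables (T : eqType) (Sigma : Type) (op : T -> Sigma -> Sigma).

Let apply_all (st : Sigma) (s : seq T) := foldl (fun st u => op u st) st s.

Lemma foldl_commute_to_front x (s1 s2 : seq T) st :
  {in s1, forall y, commute_ops (op x) (op y)} ->
  apply_all st (s1 ++ x :: s2) = apply_all (op x st) (s1 ++ s2).
Proof.
elim: s1 st => [|y s1 IHs1] st //= x_comm.
rewrite IHs1 => [|z zs1]; last by apply: x_comm; rewrite inE zs1 orbT.
by rewrite x_comm ?mem_head.
Qed.

Variable lt : rel T.

Definition respects_order (s : seq T) := pairwise (fun a b => ~~ lt b a) s.

Hypothesis incomparable_commute :
  forall x y, ~~ lt x y -> ~~ lt y x -> commute_ops (op x) (op y).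

Lemma foldl_perm_respects_order (s t : seq T) st :
  perm_eq s t -> respects_order s -> respects_order t ->
  apply_all st s = apply_all st t.
Proof.
elim: s t st => [|x s IHs] t st; first by rewrite perm_sym => /perm_nilP ->.
move=> perm_xs_t; have xt : x \in t by rewrite -(perm_mem perm_xs_t) mem_head.
case/splitPr: xt perm_xs_t => t1 t2.
rewrite /respects_order pairwise_cons pairwise_cat allrel_consr /=.
move=> perm_xs_t /andP[/allP s_not_lt_x pw_s].
move=> /and3P[/andP[/allP t1_not_gt_x rel_t1_t2] pw_t1 /andP[_ pw_t2]].
have perm_s : perm_eq s (t1 ++ t2).
  rewrite -(perm_cons x) (perm_trans perm_xs_t) //.
  by rewrite -[x :: t2]cat1s perm_catCA.
rewrite foldl_commute_to_front => [|y yt1].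
  by apply: IHs; rewrite // /respects_order pairwise_cat rel_t1_t2 pw_t1.
have : y \in x :: s by rewrite (perm_mem perm_xs_t) mem_cat yt1.
rewrite inE => /predU1P[-> //|ys].
exact: incomparable_commute (t1_not_gt_x y yt1) (s_not_lt_x y ys).
Qed.

End CommutingPermutations.

Lemma linear_extension_respects_order (T : finType) (lt : rel T) s :
  linear_extension lt s -> respects_order lt s.
Proof.
case=> s_uniq [_ lt_index]; case: s => [//|x0 s'] in s_uniq lt_index *.
apply/(pairwiseP x0) => i j.
rewrite !inE => i_lt j_lt lt_ij; apply/negP => /lt_index.
by rewrite !index_uniq // ltnNge (ltnW lt_ij).
Qed.

Section CvSets.

Variables (U : finType) (C : {set U}) (lt : rel U).
Hypothesis lt_irr : forall u, ~~ lt u u.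

Definition antichain (A : {set U}) :=
  [forall a in A, forall b in A, ~~ comparable_rel lt a b].

Lemma antichain_setU1 p (A : {set U}) :
  antichain A -> {in A, forall q, ~~ comparable_rel lt p q} ->
  antichain (p |: A).
Proof.
move=> /forall_inP anti_A p_incomp.
apply/forall_inP => a a_in; apply/forall_inP => b b_in.
move: a_in b_in; rewrite !inE /comparable_rel.
case/predU1P=> [->|aA]; case/predU1P=> [->|bA].
- by rewrite (negbTE (lt_irr p)).
- exact: p_incomp.
- by rewrite orbC; apply: p_incomp.
- exact: (forall_inP (anti_A a aA)).
Qed.

(* A Cv-set is exactly a maximal antichain of C. *)
Lemma antichain_sub_Cv_set (A : {set U}) :
  A \subset C -> antichain A -> exists2 Ci, Cv_set C lt Ci & A \subset Ci.
Proof.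
move=> sAC anti_A.
pose antichain_of_C (B : {set U}) := (B \subset C) && antichain B.
have [|Ci max_Ci sACi] := @maxset_exists _ antichain_of_C A.
  by rewrite /antichain_of_C sAC.
exists Ci => //; have /andP[sCiC anti_Ci] := maxsetp max_Ci; split=> //.
  by move=> p q pCi qCi; apply: (forall_inP (forall_inP anti_Ci p pCi)).
move=> p; rewrite inE => /andP[pNCi pC].
apply/exists_inP; apply: contraT => /exists_inP p_incomp.
have /(maxsetsup max_Ci) : antichain_of_C (p |: Ci).
  rewrite /antichain_of_C subUset sub1set pC sCiC antichain_setU1 // => q qCi.
  by apply/negP => comp_pq; apply: p_incomp; exists q.
by move=> /(_ (subsetUr _ _)) Ci_eq; rewrite -Ci_eq setU11 in pNCi.
Qed.

End CvSets.

Lemma incomparable_mem_C (U : finType) (C T : {set U}) (lt : rel U) x y :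
  CvT_order C T lt -> x != y -> ~~ comparable_rel lt x y -> x \in C.
Proof.
case=> _ _ CT_full T_total CT_comp x_neq_y x_incomp_y.
have : x \in C :|: T by rewrite CT_full inE.
case/setUP=> // xT; have : y \in C :|: T by rewrite CT_full inE.
case/setUP=> [yC|yT]; last by rewrite (T_total x y) in x_incomp_y.
move: x_incomp_y (CT_comp y x yC xT).
by rewrite /comparable_rel orbC => /negbTE->.
Qed.

Lemma incomparable_mem_Cv_set (U : finType) (C T : {set U}) (lt : rel U) x y :
  CvT_order C T lt -> x != y -> ~~ comparable_rel lt x y ->
  exists2 Ci, Cv_set C lt Ci & (x \in Ci) && (y \in Ci).
Proof.
move=> CvT x_neq_y x_incomp_y; have [[lt_irr _] _ _ _ _] := CvT.
have y_incomp_x : ~~ comparable_rel lt y x by rewrite /comparable_rel orbC.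
have [||Ci Cv_Ci /subsetP sub_Ci] :=
  @antichain_sub_Cv_set _ C lt lt_irr [set x; y].
- apply/subsetP => z; rewrite !inE => /orP[]/eqP->.
    exact: incomparable_mem_C CvT x_neq_y x_incomp_y.
  by apply: incomparable_mem_C CvT _ y_incomp_x; rewrite eq_sym.
- apply/forall_inP => a; rewrite !inE => /orP[]/eqP->;
    apply/forall_inP => b; rewrite !inE => /orP[]/eqP->;
    by rewrite // /comparable_rel (negbTE (lt_irr _)).
- by exists Ci; rewrite // !sub_Ci // !inE eqxx ?orbT.
Qed.

Theorem theorem1 (U : finType) (Sigma : Type) (op : U -> Sigma -> Sigma)
  (s0 : Sigma) (C T : {set U}) (lt : rel U) :
  CvT_order C T lt ->
  (forall Ci : {set U}, Cv_set C lt Ci ->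
     forall p q, p \in Ci -> q \in Ci -> commute_ops (op p) (op q)) ->
  forall si sj : seq U, linear_extension lt si -> linear_extension lt sj ->
  result_state op s0 si = result_state op s0 sj.
Proof.
move=> CvT Cv_comm si sj ext_i ext_j.
have incomparable_commute x y :
    ~~ lt x y -> ~~ lt y x -> commute_ops (op x) (op y).
  move=> nxy nyx; have [-> //|x_neq_y] := eqVneq x y.
  have [|Ci Cv_Ci /andP[xCi yCi]] := incomparable_mem_Cv_set CvT x_neq_y.
    by rewrite /comparable_rel negb_or nxy.
  exact: Cv_comm Cv_Ci x y xCi yCi.
apply: (foldl_perm_respects_order incomparable_commute).
- have [[uniq_i [all_i _]] [uniq_j [all_j _]]] := (ext_i, ext_j).
  by apply: uniq_perm => // z; rewrite all_i all_j.
- exact: linear_extension_respects_order.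
- exact: linear_extension_respects_order.
Qed.
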